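(* Let $\delta\ge 2$ be an integer and $n\ge \max\{8\delta,\tfrac12\delta^2+2\delta+2\}$. Then for every integer $s$ with $1\le s\le \delta-1$, $$\lambda_1\big(D(K_\delta\vee(K_{n-2\delta}+\delta K_1))\big)<\lambda_1\big(D(K_s\vee(K_{n-s-(\delta-s+1)s}+sK_{\delta-s+1}))\big).$$
   Context: For a connected graph $G$, $D(G)$ is the distance matrix and $\lambda_1(D(G))$ its largest eigenvalue. $K_m$ is the complete graph, $+$ is disjoint union, $sH$ is $s$ disjoint copies of $H$, $\vee$ is the join (disjoint union plus all edges between the two parts). *)

From HB Require Import structures.
From mathcomp Require Import all_boot all_order all_algebra.
Set Implicit Arguments. Unset Strict Implicit. Unset Printing Implicit Defensive.
Import Order.TTheory GRing.Theory Num.Theory.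

(* A simple graph is a symmetric irreflexive relation
   e : rel T on a finite vertex type T. *)

Definition Kgraph (m : nat) : rel 'I_m := fun x y => x != y.
Arguments Kgraph : clear implicits.

Definition gunion (T1 T2 : finType) (e1 : rel T1) (e2 : rel T2) : rel (T1 + T2) :=
  fun x y => match x, y with
  | inl a, inl b => e1 a b
  | inr a, inr b => e2 a b
  | _, _ => false
  end.

Definition gjoin (T1 T2 : finType) (e1 : rel T1) (e2 : rel T2) : rel (T1 + T2) :=
  fun x y => match x, y with
  | inl a, inl b => e1 a b
  | inr a, inr b => e2 a b
  | _, _ => true
  end.

Definition gcopies (s : nat) (T : finType) (e : rel T) : rel ('I_s * T) :=
  fun x y => (x.1 == y.1) && e x.2 y.2.
Arguments gcopies s [T] e.

Fixpoint reach (T : finType) (e : rel T) (k : nat) (x y : T) : bool :=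
  if k is k'.+1 then reach e k' x y || [exists z, reach e k' x z && e z y]
  else x == y.

(* graph distance: least k with a walk of length k from x to y
   (for connected graphs such k exists and k < #|T|) *)
Definition gdist (T : finType) (e : rel T) (x y : T) : nat :=
  find (fun k => reach e k x y) (iota 0 #|T|).

Definition connectedg (T : finType) (e : rel T) : Prop :=
  forall x y : T, exists k, reach e k x y.

Definition dist_mx (R : nzRingType) (T : finType) (e : rel T) : 'M[R]_#|T| :=
  \matrix_(i, j) ((gdist e (enum_val i) (enum_val j))%:R)%R.

Definition largest_eigenvalue (R : numFieldType) (m : nat) (A : 'M[R]_m) (l : R) : Prop :=
  @eigenvalue R m A l /\ forall l', @eigenvalue R m A l' -> (l' <= l)%R.

Definition lambda1_lt (R : realFieldType) (T1 T2 : finType) (e1 : rel T1) (e2 : rel T2) : Prop :=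
  exists l1 l2 : R, largest_eigenvalue (dist_mx R e1) l1 /\
                    largest_eigenvalue (dist_mx R e2) l2 /\ (l1 < l2)%R.

From mathcomp Require Import all_boot all_order all_algebra ring lra zify.
Set Implicit Arguments. Unset Strict Implicit. Unset Printing Implicit Defensive.
Import Order.TTheory GRing.Theory Num.Theory.

(* Both graphs have the shape G(s, m, t) = K_s \/ (K_m + s K_t), of diameter 2.
   The partition of its vertices into the three parts is equitable for the
   distance matrix, so the vector equal to a, b, c on the three parts is a left
   eigenvector for lam when (a, b, c) is an eigenvector of the 3x3
   quotient matrix Q.  When lam is the largest root of the characteristic
   cubic of Q, the eigenvector can be chosen positive, and a positive
   eigenvector of a nonnegative matrix belongs to its largest eigenvalue; this
   root is larger than n - 1.  For the two graphs of the theorem the two cubics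
   differ by (delta - s) times a quadratic which is negative beyond n - 1, so
   the cubic of the second graph is negative at lambda_1 of the first and has a
   larger root. *)

Definition Vkk (s m t : nat) : finType := ('I_s + ('I_m + 'I_s * 'I_t))%type.

Definition Gkk (s m t : nat) : rel (Vkk s m t) :=
  gjoin (Kgraph s) (gunion (Kgraph m) (gcopies s (Kgraph t))).
Arguments Gkk : clear implicits.

Definition dkk (s m t : nat) (x y : Vkk s m t) : nat :=
  match x, y with
  | inl i, inl j | inr (inl i), inr (inl j) => i != j
  | inr (inr p), inr (inr q) => if p.1 == q.1 then (p.2 != q.2 : nat) else 2
  | inr (inl _), inr (inr _) | inr (inr _), inr (inl _) => 2
  | _, _ => 1
  end.

Lemma card_Vkk s m t : #|Vkk s m t| = (s + (m + s * t))%N.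
Proof. by rewrite /Vkk !card_sum card_prod !card_ord. Qed.

Lemma reach1 (T : finType) (e : rel T) x y : reach e 1 x y = (x == y) || e x y.
Proof.
rewrite /=; case: eqP => [->|_] //=.
by apply/existsP/idP => [[z /andP[/eqP -> ->]] //|exy]; exists x; rewrite eqxx.
Qed.

(* Any two vertices are joined through a vertex of K_s. *)
Lemma reach2_Gkk s m t (x y : Vkk s m t) : (0 < s)%N -> reach (Gkk s m t) 2 x y.
Proof.
move=> s_gt0.
have -> : reach (Gkk s m t) 2 x y
    = reach (Gkk s m t) 1 x y || [exists z, reach (Gkk s m t) 1 x z && Gkk s m t z y] by [].
rewrite reach1; case: eqP => // x_neq_y; case exy: (Gkk _ _ _ x y) => //.
apply/existsP; exists (inl (Ordinal s_gt0)); rewrite reach1.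
case: x x_neq_y exy => [i|[i|p]]; case: y => [j|[j|q]] //= x_neq_y; rewrite ?orbT //.
by rewrite /Kgraph => /negbFE /eqP ij; case: x_neq_y; rewrite ij.
Qed.

Lemma gdist_Gkk s m t (x y : Vkk s m t) : (0 < s)%N -> (3 <= #|Vkk s m t|)%N ->
  gdist (Gkk s m t) x y = dkk x y.
Proof.
move=> s_gt0 card3; rewrite /gdist.
have -> : iota 0 #|Vkk s m t| = [:: 0, 1, 2 & iota 3 (#|Vkk s m t| - 3)]%N.
  by move: card3; case: #|_| => [|[|[|k]]] //= _; rewrite !subSS subn0.
have -> : find (fun k => reach (Gkk s m t) k x y) [:: 0, 1, 2 & iota 3 (#|Vkk s m t| - 3)]
    = if x == y then 0 else if Gkk s m t x y then 1 else 2.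
  have r1 := reach1 (Gkk s m t) x y; have r2 := reach2_Gkk x y s_gt0.
  by rewrite /= in r1 r2 *; rewrite r2 r1; case: (x == y); case: (Gkk _ _ _ x y).
case: x => [i|[i|[p1 p2]]]; case: y => [j|[j|[q1 q2]]] //=;
  rewrite /Kgraph /gcopies /=.
- by case: (i =P j) => [->|ne]; rewrite ?eqxx //; case: eqP => // -[/ne].
- by case: (i =P j) => [->|ne]; rewrite ?eqxx //; case: eqP => // -[/ne].
- case: (p1 =P q1) => [->|ne1]; case: (p2 =P q2) => [->|ne2]; rewrite ?eqxx //=.
  all: by case: eqP => // -[].
Qed.

Lemma mul4_leq_sqrD (a b : nat) : (4 * (a * b) <= (a + b) ^ 2)%N.
Proof.
have [/subnKC <-|/ltnW/subnKC <-] := leqP a b.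
- by set k := (b - a)%N; nia.
- by set k := (a - b)%N; nia.
Qed.

Section Spectrum.
Local Open Scope ring_scope.
Variable R : rcfType.

Lemma eigenvalue_le_pos_left_eigen (k : nat) (A : 'M[R]_k) (X : 'rV[R]_k) (lam l : R) :
  (forall i j, 0 <= A i j) -> (forall i, 0 < X 0 i) -> X *m A = lam *: X ->
  eigenvalue A l -> l <= lam.
Proof.
move=> A_ge0 X_gt0 XA /eigenvalueP [v vA v_neq0].
have [i0 vi0] : exists i, v 0 i != 0.
  apply/existsP; apply: contraR v_neq0 => /existsPn v0; apply/eqP/rowP => i.
  by rewrite !mxE; move/negbNE/eqP: (v0 i).
pose F i := `|v 0 i| / X 0 i.
have [j _ F_max] := @arg_maxP _ _ _ i0 predT F isT.
set c := F j.
have v_le i : `|v 0 i| <= c * X 0 i by rewrite -ler_pdivrMr //; exact: F_max.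
have vj : `|v 0 j| = c * X 0 j by rewrite /c /F divfK // gt_eqF.
have vj_gt0 : 0 < `|v 0 j|.
  by rewrite vj mulr_gt0 // (lt_le_trans _ (F_max i0 isT)) // divr_gt0 ?normr_gt0.
suff : `|l| * `|v 0 j| <= lam * `|v 0 j|.
  by rewrite ler_pM2r //; apply: le_trans; rewrite ler_norm.
have lvj : l * v 0 j = \sum_i v 0 i * A i j.
  by move/rowP/(_ j): vA; rewrite !mxE => <-.
have lamXj : \sum_i X 0 i * A i j = lam * X 0 j.
  by move/rowP/(_ j): XA; rewrite !mxE.
rewrite -normrM lvj (le_trans (ler_norm_sum _ _ _)) //.
apply: (@le_trans _ _ (\sum_i c * X 0 i * A i j)).
  by apply: ler_sum => i _; rewrite normrM (ger0_norm (A_ge0 i j)) ler_wpM2r.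
under eq_bigr => i _ do rewrite -mulrA.
by rewrite -mulr_sumr lamXj vj mulrCA.
Qed.

Lemma sumr_ord_if_eq k (j : 'I_k) (u v : R) :
  \sum_(i < k) (if i == j then u else v) = u + v * (k.-1)%:R.
Proof.
rewrite (bigD1 j) //= eqxx; congr (_ + _).
rewrite (eq_bigr (fun _ => v)); last by move=> i /negPf ->.
by rewrite sumr_const cardC1 card_ord mulr_natr.
Qed.

Lemma sumr_ord_neq k (j : 'I_k) (f : R) :
  \sum_(i < k) f * (i != j : nat)%:R = f * (k.-1)%:R.
Proof.
rewrite -[RHS]add0r -(sumr_ord_if_eq j 0 f); apply: eq_bigr => i _.
by case: (i == j); rewrite ?mulr0 ?mulr1.
Qed.

Lemma sumr_ord_const k (f : R) : \sum_(i < k) f = f * k%:R.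
Proof. by rewrite sumr_const card_ord mulr_natr. Qed.

Definition partvec (s m t : nat) (a b c : R) (x : Vkk s m t) : R :=
  match x with inl _ => a | inr (inl _) => b | inr (inr _) => c end.

Lemma sum_partvec_dkk s m t (a b c : R) (y : Vkk s m t) :
  \sum_x partvec a b c x * (dkk x y)%:R =
  match y with
  | inl _ => a * (s.-1)%:R + b * m%:R + c * (s * t)%:R
  | inr (inl _) => a * s%:R + b * (m.-1)%:R + c * (2 * (s * t))%:R
  | inr (inr _) => a * s%:R + b * (2 * m)%:R + c * (t.-1 + 2 * (s.-1 * t))%:R
  end.
Proof.
rewrite big_sumType /= big_sumType /= -(pair_bigA _ (fun i j =>
  partvec a b c (inr (inr (i, j)) : Vkk s m t) * (dkk (inr (inr (i, j))) y)%:R)) /=.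
case: y => [j|[j|[j1 j2]]] /=.
- by rewrite sumr_ord_neq !sumr_ord_const !natrM; ring.
- by rewrite sumr_ord_neq !sumr_ord_const !natrM; ring.
- rewrite [X in _ + (_ + X)](eq_bigr (fun i : 'I_s =>
      if i == j1 then c * (t.-1)%:R else c * 2 * t%:R)); last first.
    by move=> i _; case: (i == j1); rewrite /= ?sumr_ord_neq ?sumr_ord_const.
  by rewrite sumr_ord_if_eq !sumr_ord_const !natrD !natrM; ring.
Qed.

(* The characteristic polynomial det (x - Q) of the quotient matrix
   Q = [[s-1, m, st], [s, m-1, 2st], [s, 2m, t-1+2(s-1)t]], with S = s, T = t, M = m. *)
Definition char_cubic (S T M x : R) : R :=
  x ^+ 3 + (- 2 * S * T - S + T - M + 3) * x ^+ 2
  + (S ^+ 2 * T - 2 * S * T * M - 5 * S * T - 2 * S - T * M + 2 * T - 2 * M + 3) * x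
  + (S ^+ 2 * T * M + S ^+ 2 * T - 2 * S * T * M - 3 * S * T - S - T * M + T - M + 1).

Lemma natr_pred k : (0 < k)%N -> (k.-1)%:R = k%:R - 1 :> R.
Proof. by move=> k_gt0; rewrite -{2}(prednK k_gt0) -natr1 addrK. Qed.

Lemma partvec_left_eigen s m t (a b c lam : R) : (0 < s)%N -> (0 < m)%N -> (0 < t)%N ->
  lam * a = a * (s%:R - 1) + b * m%:R + c * (s%:R * t%:R) ->
  lam * b = a * s%:R + b * (m%:R - 1) + c * (2 * (s%:R * t%:R)) ->
  lam * c = a * s%:R + b * (2 * m%:R) + c * (t%:R - 1 + 2 * ((s%:R - 1) * t%:R)) ->
  (\row_j partvec a b c (enum_val j)) *m dist_mx R (Gkk s m t)
    = lam *: \row_j partvec a b c (enum_val j).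
Proof.
move=> s_gt0 m_gt0 t_gt0 ea eb ec.
have card3 : (3 <= #|Vkk s m t|)%N by rewrite card_Vkk; nia.
apply/rowP => j; rewrite !mxE.
under eq_bigr => i _ do rewrite !mxE gdist_Gkk //.
rewrite -(big_enum_val (A := predT) (fun x => partvec a b c x * (dkk x (enum_val j))%:R)).
rewrite sum_partvec_dkk !natr_pred // !natrD !natrM !natr_pred //.
by case: (enum_val j) => [_|[_|_]] /=; rewrite ?ea ?eb ?ec; ring.
Qed.

Lemma largest_eigenvalue_Gkk s m t (lam : R) : (0 < s)%N -> (0 < m)%N -> (0 < t)%N ->
  char_cubic s%:R t%:R m%:R lam = 0 -> (s + m + s * t)%:R - 1 < lam ->
  largest_eigenvalue (dist_mx R (Gkk s m t)) lam.
Proof.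
move=> s_gt0 m_gt0 t_gt0 root_lam.
rewrite !natrD natrM.
set S : R := s%:R; set M : R := m%:R; set T : R := t%:R => lam_gt.
have S1 : 1 <= S by rewrite /S ler1n.
have M1 : 1 <= M by rewrite /M ler1n.
have T1 : 1 <= T by rewrite /T ler1n.
have ST1 : 1 <= S * T by nra.
(* a column of the adjugate of lam - Q *)
set a := S * T * (lam + M + 1).
set b := S * T * (2 * lam - S + 2).
set c := (lam - S + 1) * (lam - M + 1) - M * S.
have a_gt0 : 0 < a by rewrite !mulr_gt0 //; lra.
have b_gt0 : 0 < b by rewrite !mulr_gt0 //; lra.
have c_gt0 : 0 < c by rewrite /c; nra.
pose X : 'rV[R]_#|Vkk s m t| := \row_j partvec a b c (enum_val j).
have XD : X *m dist_mx R (Gkk s m t) = lam *: X.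
  apply: partvec_left_eigen; rewrite // -/S -/M -/T /a /b /c; try ring.
  by apply/eqP; rewrite -subr_eq0 -root_lam /char_cubic; apply/eqP; ring.
have X_gt0 i : 0 < X 0 i by rewrite mxE /partvec; case: (enum_val i) => [?|[?|?]].
split.
  apply/eigenvalueP; exists X => //.
  have i0 : 'I_#|Vkk s m t| by apply: (@Ordinal _ 0); rewrite card_Vkk; lia.
  by apply/eqP => /rowP /(_ i0) X0; move: (X_gt0 i0); rewrite X0 mxE ltxx.
by move=> l; apply: eigenvalue_le_pos_left_eigen XD => // i j; rewrite mxE ler0n.
Qed.

Lemma cubic_root_gt (c2 c1 c0 a : R) :
  a ^+ 3 + c2 * a ^+ 2 + c1 * a + c0 < 0 ->
  exists2 x, a < x & x ^+ 3 + c2 * x ^+ 2 + c1 * x + c0 = 0.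
Proof.
move=> pa_lt0.
pose p : {poly R} := 'X ^+ 3 + c2%:P * 'X ^+ 2 + c1%:P * 'X + c0%:P.
have pE x : p.[x] = x ^+ 3 + c2 * x ^+ 2 + c1 * x + c0 by rewrite !hornerE.
pose K := `|c2| + `|c1| + `|c0|.
pose U := 1 + `|a| + K.
have n2 := normr_ge0 c2; have n1 := normr_ge0 c1; have n0 := normr_ge0 c0.
have na := normr_ge0 a.
have U1 : 1 <= U by rewrite /U /K; lra.
have aU : a <= U by rewrite /U /K; have := ler_norm a; lra.
(* beyond 1 + K the leading term dominates *)
have pU : 0 <= p.[U].
  have U2 : 0 <= U ^+ 2 by rewrite exprn_ge0 //; lra.
  have h2 : - `|c2| * U ^+ 2 <= c2 * U ^+ 2 by rewrite ler_wpM2r // lerNl -normrN ler_norm.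
  have h1 : - `|c1| * U <= c1 * U by rewrite ler_wpM2r //; [lra | rewrite lerNl -normrN ler_norm].
  have h0 : - `|c0| <= c0 by rewrite lerNl -normrN ler_norm.
  have u2 : U <= U ^+ 2 by rewrite expr2; nra.
  have UK : K + 1 <= U by rewrite /U; lra.
  have KU : K * U ^+ 2 <= U * U ^+ 2 - U ^+ 2 by nra.
  by rewrite pE exprS; rewrite /K in KU; nra.
have [x /andP [ax _] /eqP px] : exists2 x, a <= x <= U & root p x.
  by apply: poly_ivt => //; rewrite pE (ltW pa_lt0).
rewrite pE in px; exists x => //.
by rewrite lt_neqAle ax andbT; apply: contraTneq pa_lt0 => ->; rewrite px ltxx.
Qed.

Lemma char_cubic_lt0_at_order_pred (S T M : R) : 1 <= S -> 1 <= T -> 1 <= M ->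
  char_cubic S T M (S + M + S * T - 1) < 0.
Proof.
move=> S1 T1 M1.
have -> : char_cubic S T M (S + M + S * T - 1) =
  - ((S - 1) * (S * T) * (S * T) * T + (S - 1) * (S * T) * (S * T)
     + (4 * S - 1) * (S * T) * T * M + (S * T) * (2 * S * M + 3 * M * M)).
  by rewrite /char_cubic; ring.
have ST1 : 1 <= S * T by nra.
have h1 : 0 <= (S - 1) * (S * T) * (S * T) * T by rewrite !mulr_ge0 //; lra.
have h2 : 0 <= (S - 1) * (S * T) * (S * T) by rewrite !mulr_ge0 //; lra.
have h3 : 0 <= (4 * S - 1) * (S * T) * T * M by rewrite !mulr_ge0 //; lra.
have h4 : 0 < (S * T) * (2 * S * M + 3 * M * M) by rewrite mulr_gt0 //; nra.
lra.
Qed.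

Lemma exists_largest_eigenvalue_Gkk s m t : (0 < s)%N -> (0 < m)%N -> (0 < t)%N ->
  exists l : R, [/\ largest_eigenvalue (dist_mx R (Gkk s m t)) l,
                    char_cubic s%:R t%:R m%:R l = 0 & (s + m + s * t)%:R - 1 < l].
Proof.
move=> s_gt0 m_gt0 t_gt0.
have := @char_cubic_lt0_at_order_pred s%:R t%:R m%:R.
rewrite !ler1n -!natrM -!natrD => /(_ s_gt0 t_gt0 m_gt0) /cubic_root_gt [l l_gt root_l].
by exists l; split=> //; apply: largest_eigenvalue_Gkk.
Qed.

Lemma lambda1_lt_Gkk s1 m1 t1 s2 m2 t2 :
  (0 < s1)%N -> (0 < m1)%N -> (0 < t1)%N -> (0 < s2)%N -> (0 < m2)%N -> (0 < t2)%N ->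
  (s2 + m2 + s2 * t2 <= s1 + m1 + s1 * t1)%N ->
  (forall l : R, (s1 + m1 + s1 * t1)%:R - 1 < l -> char_cubic s1%:R t1%:R m1%:R l = 0 ->
     char_cubic s2%:R t2%:R m2%:R l < 0) ->
  lambda1_lt R (Gkk s1 m1 t1) (Gkk s2 m2 t2).
Proof.
move=> s1_gt0 m1_gt0 t1_gt0 s2_gt0 m2_gt0 t2_gt0 order_le cubic2_lt0.
have [l1 [L1 root1 l1_gt]] := exists_largest_eigenvalue_Gkk s1_gt0 m1_gt0 t1_gt0.
have /cubic_root_gt [l2 l12 root2] := cubic2_lt0 _ l1_gt root1.
exists l1, l2; split=> //; split=> //; apply: largest_eigenvalue_Gkk => //.
by apply: le_lt_trans l12; apply: le_trans (ltW l1_gt); rewrite lerD2r ler_nat.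
Qed.

Definition cubic_gap (S E N x : R) : R :=
  (2 - S) * x ^+ 2
  + (2 * S ^+ 2 * E + 7 * S ^+ 2 + S * E - 2 * S * N - 10 * S - 5 * E + N + 3) * x
  + (- S ^+ 3 * E - 3 * S ^+ 3 + 2 * S ^+ 2 * E + S ^+ 2 * N + 13 * S ^+ 2 + 7 * S * E
     - 4 * S * N - 9 * S + 2 * E ^+ 2 - E * N - 5 * E + N + 1).

Lemma char_cubic_sub (S E N x : R) :
  char_cubic S (E + 1) (N - S - (E + 1) * S) x - char_cubic (S + E) 1 (N - 2 * (S + E)) x
  = E * cubic_gap S E N x.
Proof. by rewrite /char_cubic /cubic_gap; ring. Qed.

(* For S = 1 the gap is a linear function of x; it is read off through the
   first cubic, of which x is a root. *)
Lemma cubic_gap_lt0_S1 (E N x : R) : 0 <= E -> 2 * (1 + E) <= N -> 0 < x ->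
  char_cubic (1 + E) 1 (N - 2 * (1 + E)) x = 0 -> cubic_gap 1 E N x < 0.
Proof.
move=> E_ge0 N_ge x_gt0 root_x.
pose D := 1 + E.
have D1 : 1 <= D by rewrite /D; lra.
have : char_cubic (1 + E) 1 (N - 2 * (1 + E)) x = (x + D + 2) * cubic_gap 1 E N x
    + ((5 * D ^+ 2 + 2 * D) * x + (2 * D ^+ 2 * (N - 2 * D) + 2 * D ^+ 2 + D * N + D)).
  by rewrite /char_cubic /cubic_gap /D; ring.
have r1 : 0 < (5 * D ^+ 2 + 2 * D) * x by rewrite mulr_gt0 //; nra.
have r2 : 0 <= 2 * D ^+ 2 * (N - 2 * D) by rewrite mulr_ge0 //; [nra | rewrite /D; lra].
have r3 : 0 <= D * N by rewrite mulr_ge0 //; rewrite /D; lra.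
have r4 : 0 <= D ^+ 2 by rewrite exprn_ge0 //; lra.
rewrite root_x => id0.
have : (x + D + 2) * cubic_gap 1 E N x < 0 by lra.
by rewrite pmulr_rlt0 //; lra.
Qed.

(* For S >= 2 the gap is a concave quadratic, negative and decreasing at N - 1. *)
Lemma cubic_gap_lt0_S2 (S E N x : R) : 2 <= S -> 1 <= E -> 8 * (S + E) <= N ->
  (S + E) ^+ 2 + 4 * (S + E) + 4 <= 2 * N -> N - 1 <= x -> cubic_gap S E N x < 0.
Proof.
move=> S2 E1 N_ge1 N_ge2 x_ge.
set L := N - 1.
set slope := 2 * (2 - S) * L
  + (2 * S ^+ 2 * E + 7 * S ^+ 2 + S * E - 2 * S * N - 10 * S - 5 * E + N + 3).
have -> : cubic_gap S E N x
    = cubic_gap S E N L + slope * (x - L) + (2 - S) * (x - L) ^+ 2.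
  by rewrite /cubic_gap /slope; ring.
have SE_ge0 : 0 <= S * E by nra.
have N_gt0 : 0 < N by lra.
have amgm : 2 * S * (E + 2) <= N by have := sqr_ge0 (S - E - 2); nra.
have SN1 : S * (2 * S * (E + 2)) <= S * N by rewrite ler_wpM2l //; lra.
have SN2 : S * (8 * (S + E)) <= S * N by rewrite ler_wpM2l //; lra.
have SN3 : 0 <= (S - 2) * N by rewrite mulr_ge0 //; lra.
have F2 : 0 <= (3 * S - 3) * N - (2 * S ^+ 2 * E + 8 * S ^+ 2 + S * E) by nra.
have F3 : 0 < N * (10 * S + 6 * E + 1) - (6 * S ^+ 2 + 6 * S * E + 2 * E ^+ 2).
  have : 8 * (S + E) * (10 * S + 6 * E + 1) <= N * (10 * S + 6 * E + 1).
    by rewrite ler_wpM2r //; lra.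
  nra.
have gap_L : cubic_gap S E N L < 0.
  have -> : cubic_gap S E N L
      = - (N * ((3 * S - 3) * N - (2 * S ^+ 2 * E + 8 * S ^+ 2 + S * E)))
        - (N * (10 * S + 6 * E + 1) - (6 * S ^+ 2 + 6 * S * E + 2 * E ^+ 2))
        - S ^+ 3 * E - 3 * S ^+ 3.
    by rewrite /cubic_gap /L; ring.
  have : 0 <= N * ((3 * S - 3) * N - (2 * S ^+ 2 * E + 8 * S ^+ 2 + S * E)).
    by rewrite mulr_ge0 //; lra.
  have : 0 <= S ^+ 3 * E by rewrite mulr_ge0 ?exprn_ge0 //; lra.
  have : 0 < S ^+ 3 by rewrite exprn_gt0 //; lra.
  lra.
have slope_le0 : slope <= 0.
  have : (3 * S - 5) * (8 * (S + E)) <= (3 * S - 5) * N by rewrite ler_wpM2l //; lra.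
  by rewrite /slope /L; nra.
have : (2 - S) * (x - L) ^+ 2 <= 0 by rewrite mulr_le0_ge0 ?sqr_ge0 //; lra.
have : slope * (x - L) <= 0 by rewrite mulr_le0_ge0 // subr_ge0.
lra.
Qed.

Lemma char_cubic_lt0_at_root (s e n : nat) (x : R) : (1 <= s)%N -> (1 <= e)%N ->
  (8 * (s + e) <= n)%N -> ((s + e) ^ 2 + 4 * (s + e) + 4 <= 2 * n)%N ->
  n%:R - 1 < x -> char_cubic (s + e)%:R 1 (n - 2 * (s + e))%:R x = 0 ->
  char_cubic s%:R (e + 1)%:R (n - s - (e + 1) * s)%:R x < 0.
Proof.
move=> s1 e1 n_ge1 n_ge2 x_gt root_x.
have n_ge3 : (s + (e + 1) * s <= n)%N.
  by have := mul4_leq_sqrD s (e + 2); rewrite addnA; lia.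
have m2E : (n - s - (e + 1) * s)%:R = n%:R - s%:R - (e%:R + 1) * s%:R :> R.
  by rewrite natrB ?natrB ?natrM ?natrD //; lia.
have m1E : (n - 2 * (s + e))%:R = n%:R - 2 * (s%:R + e%:R) :> R.
  by rewrite natrB ?natrM ?natrD //; lia.
move: n_ge1 n_ge2 x_gt root_x; rewrite -!(ler_nat R) m1E m2E !(natrD, natrM, natrX).
set S : R := s%:R; set E : R := e%:R; set N : R := n%:R => N_ge1 N_ge2 x_gt root_x.
have E1 : 1 <= E by rewrite /E ler1n.
have /eqP := char_cubic_sub S E N x.
rewrite root_x subr0 => /eqP ->; rewrite pmulr_rlt0; last lra.
have [s_eq1|s_ge2] := leqP s 1.
- have S_eq1 : S = 1 by rewrite /S (_ : s = 1%N) //; lia.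
  by rewrite S_eq1 in N_ge1 root_x *; apply: cubic_gap_lt0_S1 => //; lra.
- have S2 : 2 <= S by rewrite /S (ler_nat R 2).
  by apply: cubic_gap_lt0_S2 => //; lra.
Qed.

End Spectrum.

Theorem mainTheorem5 (R : rcfType) (delta n : nat) :
  (2 <= delta)%N ->
  (8 * delta <= n)%N ->
  (* n >= delta^2/2 + 2 delta + 2, multiplied by 2 *)
  (delta ^ 2 + 4 * delta + 4 <= 2 * n)%N ->
  forall s : nat, (1 <= s)%N -> (s <= delta - 1)%N ->
  lambda1_lt R
    (gjoin (Kgraph delta)
           (gunion (Kgraph (n - 2 * delta)) (gcopies delta (Kgraph 1))))
    (gjoin (Kgraph s)
           (gunion (Kgraph (n - s - (delta - s + 1) * s))
                   (gcopies s (Kgraph (delta - s + 1))))).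
Proof.
move=> delta2 n_ge1 n_ge2 s s1 s_lt.
change (lambda1_lt R (Gkk delta (n - 2 * delta) 1)
  (Gkk s (n - s - (delta - s + 1) * s) (delta - s + 1))).
have [e e1 delta_eq] : exists2 e, (1 <= e)%N & delta = (s + e)%N.
  by exists (delta - s)%N; lia.
subst delta.
have amgm := mul4_leq_sqrD s (e + 2).
rewrite addKn; apply: lambda1_lt_Gkk; try lia.
have -> : (s + e + (n - 2 * (s + e)) + (s + e) * 1 = n)%N by lia.
by move=> l; apply: char_cubic_lt0_at_root.
Qed.
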